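(* Let $D_{\mathrm{jnt}}$ be any distribution of $(\mathsf X,\bar{\mathsf Y},\mathsf Y)$ on $\mathcal X\times\{0,1\}\times\{0,1\}$, let $c,\bar c\in[0,1]$ and $\bar D\in\{\bar D_{\mathrm{DP}},\bar D_{\mathrm{EO}}\}$. For $\tau\ge0$ let $$V(\tau)=\inf\{\mathrm{CS}(f;D,c)\ :\ f\colon\mathcal X\to[0,1]\text{ measurable},\ \mathrm{CS}^\diamond(f;\bar D,\bar c)\ge\tau\}$$ and $F(\tau)=V(\tau)-V(0)$ (the fairness frontier). Then $F$ is convex on the set $T=\{\tau\ge0:\text{the constraint set above is nonempty}\}$.
   Context: $D$ is the law of $(\mathsf X,\mathsf Y)$, $\bar D_{\mathrm{DP}}$ the law of $(\mathsf X,\bar{\mathsf Y})$, $\bar D_{\mathrm{EO}}$ the law of $(\mathsf X,\bar{\mathsf Y})$ conditional on $\mathsf Y=1$. A randomised classifier $f\colon\mathcal X\to[0,1]$ predicts $1$ on $x$ with probability $f(x)$. For a distribution $E$ of $(\mathsf X,\mathsf Z)$ on $\mathcal X\times\{0,1\}$ with $p=\Pr(\mathsf Z=1)$: $\mathrm{FNR}(f;E)=\mathbb E_{\mathsf X\mid\mathsf Z=1}[1-f(\mathsf X)]$, $\mathrm{FPR}(f;E)=\mathbb E_{\mathsf X\mid\mathsf Z=0}[f(\mathsf X)]$, $\mathrm{CS}(f;E,c)=p(1-c)\,\mathrm{FNR}(f;E)+(1-p)c\,\mathrm{FPR}(f;E)$, and $\mathrm{CS}^\diamond(f;E,c)=\min\big(\mathrm{CS}(f;E,c),\mathrm{CS}(1-f;E,c)\big)$.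 *)

From HB Require Import structures.
From mathcomp Require Import all_boot all_order all_algebra.
From mathcomp Require Import all_classical all_reals all_analysis.
Set Implicit Arguments. Unset Strict Implicit. Unset Printing Implicit Defensive.
Import Order.TTheory GRing.Theory Num.Theory.
Local Open Scope classical_set_scope.
Local Open Scope ring_scope.

(* Sample space of the joint distribution D_jnt of (X, Ybar, Y):
   a point w has w.1.1 = X, w.1.2 = Ybar, w.2 = Y. *)
Section Fair.
Context {d : measure_display} {X : measurableType d} {R : realType}.
Local Notation T := ((X * bool) * bool)%type.

(* The two-variable laws (X,Z) used in the paper, each given by a conditioning
   event A on the joint space and a label Z : T -> bool.
   - D        : law of (X, Y)                       : A = setT,     Z = Y
   - Dbar_DP  : law of (X, Ybar)                    : A = setT,     Z = Ybar
   - Dbar_EO  : law of (X, Ybar) conditional on Y=1 : A = [Y = 1],  Z = Ybar *)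
Record view := View { vA : set T ; vZ : T -> bool }.

Definition D_view : view := View setT (fun w => w.2).
Definition DP_view : view := View setT (fun w => w.1.2).
Definition EO_view : view := View [set w : T | w.2 = true] (fun w => w.1.2).

Inductive fair_notion := DP | EO.
Definition Dbar_view (n : fair_notion) : view :=
  match n with DP => DP_view | EO => EO_view end.

Variable P : probability T R.

Definition pr (B : set T) : R := fine (P B).

Definition cexp (B : set T) (g : T -> R) : R :=
  fine (\int[P]_(w in B) (g w)%:E) / pr B.

Definition evZ (v : view) (b : bool) : set T := vA v `&` [set w | vZ v w = b].

Definition pZ (v : view) : R := pr (evZ v true) / pr (vA v).

Definition FNR (f : X -> R) (v : view) : R :=
  cexp (evZ v true) (fun w => 1 - f w.1.1).
Definition FPR (f : X -> R) (v : view) : R :=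
  cexp (evZ v false) (fun w => f w.1.1).

Definition CS (f : X -> R) (v : view) (c : R) : R :=
  pZ v * (1 - c) * FNR f v + (1 - pZ v) * c * FPR f v.

Definition CSd (f : X -> R) (v : view) (c : R) : R :=
  Num.min (CS f v c) (CS (fun x => 1 - f x) v c).

Definition classifier (f : X -> R) : Prop :=
  measurable_fun setT f /\ forall x, 0 <= f x <= 1.

Definition feasible (n : fair_notion) (cb tau : R) : set (X -> R) :=
  [set f | classifier f /\ tau <= CSd f (Dbar_view n) cb].

Definition Vval (n : fair_notion) (c cb tau : R) : R :=
  inf [set CS f D_view c | f in feasible n cb tau].

Definition frontier (n : fair_notion) (c cb tau : R) : R :=
  Vval n c cb tau - Vval n c cb 0.

Definition Tset (n : fair_notion) (cb : R) : set R :=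
  [set tau | 0 <= tau /\ feasible n cb tau !=set0].

End Fair.

From HB Require Import structures.
From mathcomp Require Import all_boot all_order all_algebra.
From mathcomp Require Import all_classical all_reals all_analysis.
From mathcomp Require Import measurable_realfun ring lra.
Import Order.TTheory GRing.Theory Num.Theory.
Local Open Scope classical_set_scope.
Local Open Scope ring_scope.

(* The cost CS(f; D, c) is affine in the classifier f, and CS^diamond, a
   minimum of two affine functions of f, is concave.  Hence mixing two
   feasible classifiers with weights l, 1 - l is feasible for the mixed
   threshold and costs the mixture of the two costs, which makes V convex;
   F differs from V by a constant. *)

Lemma min_comb_le (R : realDomainType) (l a1 b1 a2 b2 : R) : 0 <= l <= 1 ->
  l * Num.min a1 b1 + (1 - l) * Num.min a2 b2
    <= Num.min (l * a1 + (1 - l) * a2) (l * b1 + (1 - l) * b2).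
Proof.
move=> /andP[l0 l1].
have min_le_l (x y : R) : Num.min x y <= x by rewrite ge_min lexx.
have min_le_r (x y : R) : Num.min x y <= y by rewrite ge_min lexx orbT.
have := (min_le_l a1 b1, min_le_r a1 b1, min_le_l a2 b2, min_le_r a2 b2).
case=> [[[? ?] ?] ?].
rewrite le_min; apply/andP; split; nra.
Qed.

Section ValueFunction.
Context {R : realType} {U : Type}.
Variables (mix : R -> U -> U -> U) (A : set U) (J g : U -> R) (m : R).
Hypothesis A_mix : forall (l : R) u1 u2,
  0 <= l <= 1 -> A u1 -> A u2 -> A (mix l u1 u2).
Hypothesis J_mix : forall (l : R) u1 u2,
  A u1 -> A u2 -> J (mix l u1 u2) = l * J u1 + (1 - l) * J u2.
Hypothesis g_mix : forall (l : R) u1 u2, 0 <= l <= 1 -> A u1 -> A u2 ->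
  l * g u1 + (1 - l) * g u2 <= g (mix l u1 u2).
Hypothesis J_lb : forall u, A u -> m <= J u.

Definition constrained (tau : R) : set U := [set u | A u /\ tau <= g u].

Definition value (tau : R) : R := inf [set J u | u in constrained tau].

Lemma has_inf_value {tau : R} : constrained tau !=set0 ->
  has_inf [set J u | u in constrained tau].
Proof.
move=> [u uC]; split; first by exists (J u), u.
by exists m => _ [v [Av _] <-]; exact: J_lb.
Qed.

Lemma constrained_mix {l t1 t2 : R} {u1 u2 : U} : 0 <= l <= 1 ->
  constrained t1 u1 -> constrained t2 u2 ->
  constrained (l * t1 + (1 - l) * t2) (mix l u1 u2).
Proof.
move=> l01 [A1 g1] [A2 g2]; split; first exact: A_mix.
apply: le_trans _ (g_mix _ _ _ l01 A1 A2); move: l01 => /andP[l0 l1]; nra.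
Qed.

Lemma value_convex (l t1 t2 : R) : 0 <= l <= 1 ->
  constrained t1 !=set0 -> constrained t2 !=set0 ->
  value (l * t1 + (1 - l) * t2) <= l * value t1 + (1 - l) * value t2.
Proof.
move=> l01 C1 C2; apply/ler_addgt0Pr => e e0.
have [_ [u1 uC1 <-] lt1] := inf_adherent e0 (has_inf_value C1).
have [_ [u2 uC2 <-] lt2] := inf_adherent e0 (has_inf_value C2).
have uC := constrained_mix l01 uC1 uC2.
have le_mix : value (l * t1 + (1 - l) * t2) <= J (mix l u1 u2).
  by apply: (ge_inf (has_inf_value (ex_intro _ _ uC)).2); exists (mix l u1 u2).
rewrite J_mix in le_mix; [|exact: uC1.1|exact: uC2.1].
rewrite /value; move: l01 => /andP[l0 l1]; nra.
Qed.

End ValueFunction.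

Section Fairness.
Context {d : measure_display} {X : measurableType d} {R : realType}.
Variable P : probability ((X * bool) * bool)%type R.
Local Notation T := ((X * bool) * bool)%type.

Definition mix_classifier (l : R) (f1 f2 : X -> R) : X -> R :=
  fun x => l * f1 x + (1 - l) * f2 x.

Definition measurable_view (v : @view d X) : Prop :=
  measurable (vA v) /\ forall b, measurable (evZ v b).

Lemma measurable_label_Y (b : bool) : measurable [set w : T | w.2 = b].
Proof.
have mY : measurable_fun setT (fun w : T => w.2) by exact: measurable_snd.
by have := mY measurableT [set b] I; rewrite setTI.
Qed.

Lemma measurable_label_Ybar (b : bool) : measurable [set w : T | w.1.2 = b].
Proof.
have mYbar : measurable_fun setT (fun w : T => w.1.2) by exact: measurableT_comp.
by have := mYbar measurableT [set b] I; rewrite setTI.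
Qed.

Lemma measurable_D_view : measurable_view D_view.
Proof.
split=> [|b]; first exact: measurableT.
exact: measurableI measurableT (measurable_label_Y b).
Qed.

Lemma measurable_Dbar_view n : measurable_view (Dbar_view n).
Proof.
case: n; split=> [|b].
- exact: measurableT.
- exact: measurableI measurableT (measurable_label_Ybar b).
- exact: measurable_label_Y.
- exact: measurableI (measurable_label_Y true) (measurable_label_Ybar b).
Qed.

Lemma classifierC {f : X -> R} : classifier f -> classifier (fun x => 1 - f x).
Proof.
move=> [mf f01]; split; first exact: measurable_funB.
by move=> x; have := f01 x; lra.
Qed.

Lemma classifier_mix (l : R) (f1 f2 : X -> R) : 0 <= l <= 1 ->
  classifier f1 -> classifier f2 -> classifier (mix_classifier l f1 f2).
Proof.
move=> /andP[l0 l1] [mf1 f1_01] [mf2 f2_01]; split.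
  by apply: measurable_funD; apply: measurable_funM.
by move=> x; have := f1_01 x; have := f2_01 x; rewrite /mix_classifier; nra.
Qed.

Lemma classifier_integrable {f : X -> R} {B : set T} :
  classifier f -> measurable B ->
  P.-integrable B (EFin \o (fun w : T => f w.1.1)).
Proof.
move=> [mf f01] mB.
have mfX : measurable_fun setT (fun w : T => f w.1.1).
  by apply: measurableT_comp => //; exact: measurableT_comp.
apply: measurable_bounded_integrable => //.
- by rewrite (le_lt_trans (probability_le1 _ mB)) ?ltry.
- exact: measurable_funS mfX.
- exists 1; split=> // M M1 w _ /=.
  by have /andP[f0 f1] := f01 w.1.1; rewrite ger0_norm //; lra.
Qed.

Lemma cexp_comb (B : set T) (g1 g2 : T -> R) (a b : R) : measurable B ->
  P.-integrable B (EFin \o g1) -> P.-integrable B (EFin \o g2) ->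
  cexp P B (fun w => a * g1 w + b * g2 w) = a * cexp P B g1 + b * cexp P B g2.
Proof.
move=> mB ig1 ig2; rewrite /cexp.
change (Rintegral P B (fun w => a * g1 w + b * g2 w) / pr P B =
  a * (Rintegral P B g1 / pr P B) + b * (Rintegral P B g2 / pr P B)).
rewrite RintegralD //; last 2 first.
- by apply: eq_integrable (integrableZl mB a ig1) => // w _; rewrite /= EFinM.
- by apply: eq_integrable (integrableZl mB b ig2) => // w _; rewrite /= EFinM.
by rewrite !RintegralZl // mulrDl !mulrA.
Qed.

Lemma FNR_mix (v : view) (l : R) (f1 f2 : X -> R) : measurable_view v ->
  classifier f1 -> classifier f2 ->
  FNR P (mix_classifier l f1 f2) v = l * FNR P f1 v + (1 - l) * FNR P f2 v.
Proof.
move=> [_ mZ] cf1 cf2; rewrite /FNR -cexp_comb //.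
- by congr cexp; apply: funext => w; rewrite /mix_classifier; ring.
- exact: classifier_integrable (classifierC cf1) (mZ true).
- exact: classifier_integrable (classifierC cf2) (mZ true).
Qed.

Lemma FPR_mix (v : view) (l : R) (f1 f2 : X -> R) : measurable_view v ->
  classifier f1 -> classifier f2 ->
  FPR P (mix_classifier l f1 f2) v = l * FPR P f1 v + (1 - l) * FPR P f2 v.
Proof.
move=> [_ mZ] cf1 cf2; rewrite /FPR -cexp_comb //.
- exact: classifier_integrable cf1 (mZ false).
- exact: classifier_integrable cf2 (mZ false).
Qed.

Lemma CS_mix (v : view) (c l : R) (f1 f2 : X -> R) : measurable_view v ->
  classifier f1 -> classifier f2 ->
  CS P (mix_classifier l f1 f2) v c = l * CS P f1 v c + (1 - l) * CS P f2 v c.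
Proof.
by move=> mv cf1 cf2; rewrite /CS FNR_mix // FPR_mix //; ring.
Qed.

Lemma CSd_mix (v : view) (c l : R) (f1 f2 : X -> R) : measurable_view v ->
  0 <= l <= 1 -> classifier f1 -> classifier f2 ->
  l * CSd P f1 v c + (1 - l) * CSd P f2 v c <= CSd P (mix_classifier l f1 f2) v c.
Proof.
move=> mv l01 cf1 cf2; rewrite /CSd CS_mix //.
have -> : (fun x => 1 - mix_classifier l f1 f2 x) =
    mix_classifier l (fun x => 1 - f1 x) (fun x => 1 - f2 x).
  by apply: funext => x; rewrite /mix_classifier; ring.
by rewrite CS_mix //; [exact: min_comb_le | exact: classifierC ..].
Qed.

Lemma pr_ge0 (B : set T) : 0 <= pr P B.
Proof. by rewrite fine_ge0. Qed.

Lemma pr_le (B C : set T) : measurable B -> measurable C -> B `<=` C ->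
  pr P B <= pr P C.
Proof.
move=> mB mC BC; rewrite fine_le ?fin_num_measure //.
by apply: le_measure => //; rewrite inE.
Qed.

Lemma pZ_itv (v : view) : measurable_view v -> 0 <= pZ P v <= 1.
Proof.
move=> [mA mZ]; rewrite /pZ divr_ge0 ?pr_ge0 //=.
have [->|A_gt0] := eqVneq (pr P (vA v)) 0; first by rewrite invr0 mulr0.
rewrite ler_pdivrMr ?mul1r; first by apply: pr_le => // w [].
by rewrite lt_neqAle eq_sym A_gt0 pr_ge0.
Qed.

Lemma cexp_ge0 (B : set T) (g : T -> R) : (forall w, 0 <= g w) ->
  0 <= cexp P B g.
Proof. by move=> g0; rewrite divr_ge0 ?pr_ge0 // Rintegral_ge0. Qed.

Lemma CS_ge0 (v : view) (c : R) (f : X -> R) : measurable_view v ->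
  0 <= c <= 1 -> classifier f -> 0 <= CS P f v c.
Proof.
move=> mv c01 [_ f01].
have /andP[p0 p1] := pZ_itv v mv.
have FNR_ge0 : 0 <= FNR P f v by apply: cexp_ge0 => w; have := f01 w.1.1; lra.
have FPR_ge0 : 0 <= FPR P f v by apply: cexp_ge0 => w; have := f01 w.1.1; lra.
rewrite /CS; move: c01 => /andP[c0 c1].
by apply: addr_ge0; apply: mulr_ge0 => //; apply: mulr_ge0; lra.
Qed.

End Fairness.

Theorem lemma4 (d : measure_display) (X : measurableType d) (R : realType)
  (P : probability ((X * bool) * bool)%type R) (c cb : R)
  (hc : 0 <= c <= 1) (hcb : 0 <= cb <= 1) (n : fair_notion)
  (t1 t2 l : R) :
  t1 \in Tset P n cb -> t2 \in Tset P n cb -> 0 <= l <= 1 ->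
  l * t1 + (1 - l) * t2 \in Tset P n cb ->
  frontier P n c cb (l * t1 + (1 - l) * t2)
    <= l * frontier P n c cb t1 + (1 - l) * frontier P n c cb t2.
Proof.
rewrite !inE => -[_ C1] [_ C2] l01 _.
have V_convex : Vval P n c cb (l * t1 + (1 - l) * t2)
    <= l * Vval P n c cb t1 + (1 - l) * Vval P n c cb t2.
  apply: (value_convex mix_classifier classifier (fun f => CS P f D_view c)
    (fun f => CSd P f (Dbar_view n) cb) 0) l01 C1 C2.
  - exact: classifier_mix.
  - by move=> l' f1 f2; exact: CS_mix measurable_D_view.
  - by move=> l' f1 f2; exact: CSd_mix (measurable_Dbar_view n).
  - by move=> f; exact: CS_ge0 measurable_D_view hc.
by rewrite /frontier; lra.
Qed.
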